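(* Let $\bm{L}_t\in\mathbb{R}^{n_1\times n_1}$ be a diagonal matrix with positive diagonal entries. Let $\bm{X}_t,\bm{X}\in\mathbb{R}^{n_1\times n_2}$ be rank-$r$ matrices with compact SVDs $\bm{X}_t=\bm{U}_t\bm{\Sigma}_t\bm{V}_t^T$ and $\bm{X}=\bm{U}\bm{\Sigma}\bm{V}^T$ ($\bm{U}_t,\bm{U}\in\mathbb{R}^{n_1\times r}$ with orthonormal columns). Define $\widetilde{\bm{U}}_t=\bm{U}_t(\bm{U}_t^T\bm{L}_t^{1/4}\bm{U}_t)^{-1/2}$ and $\widetilde{\bm{U}}=\bm{U}(\bm{U}^T\bm{L}_t^{1/4}\bm{U})^{-1/2}$. Then $$\big\|\widetilde{\bm{U}}_t\widetilde{\bm{U}}_t^T\bm{L}_t^{1/4}-\widetilde{\bm{U}}\widetilde{\bm{U}}^T\bm{L}_t^{1/4}\big\|_{\bm{L}_t^{1/4}}\le\frac{\mathrm{cond}(\bm{L}_t^{3/8})}{\sigma_{\min}(\bm{X})}\,\|\bm{X}_t-\bm{X}\|_2.$$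
   Context: For symmetric positive definite $\bm{M}$, $\|\bm{x}\|_{\bm{M}}=\langle\bm{M}\bm{x},\bm{x}\rangle^{1/2}$ and for a square matrix $\bm{A}$, $\|\bm{A}\|_{\bm{M}}=\sup_{\bm{x}\neq0}\|\bm{A}\bm{x}\|_{\bm{M}}/\|\bm{x}\|_{\bm{M}}$. $\|\cdot\|_2$ is the spectral norm, $\sigma_{\min}(\bm{X})$ the smallest nonzero singular value of $\bm{X}$, and $\mathrm{cond}(\bm{Z})=\sigma_{\max}(\bm{Z})/\sigma_{\min}(\bm{Z})$. The columns of $\widetilde{\bm{U}}_t$, $\widetilde{\bm{U}}$ are orthonormal with respect to $\langle\bm{x},\bm{y}\rangle_{\bm{L}_t^{1/4}}=\langle\bm{L}_t^{1/4}\bm{x},\bm{y}\rangle$. In the paper $\bm{L}_t=\epsilon_t\bm{I}+\mathrm{diag}(\bm{G}_t\bm{G}_t^T)$, $\epsilon_t>0$. *)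

From HB Require Import structures.
From mathcomp Require Import all_boot all_order all_algebra.
From mathcomp Require Import all_classical all_reals all_analysis.
Set Implicit Arguments. Unset Strict Implicit. Unset Printing Implicit Defensive.
Import Order.TTheory GRing.Theory Num.Theory.
Local Open Scope ring_scope.
Local Open Scope classical_set_scope.

Section Defs.
Variable R : realType.

Definition diag_powR n (L : 'M[R]_n) (p : R) : 'M[R]_n :=
  \matrix_(i, j) (if i == j then (L i i) `^ p else 0).

Definition vnormM n (M : 'M[R]_n) (x : 'cV[R]_n) : R :=
  Num.sqrt ((x^T *m (M *m x)) 0 0).

Definition opnormM n (M A : 'M[R]_n) : R :=
  sup [set vnormM M (A *m x) / vnormM M x | x in [set x : 'cV[R]_n | x != 0]].

Definition vnorm2 n (x : 'cV[R]_n) : R := Num.sqrt ((x^T *m x) 0 0).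

Definition spec_norm m n (A : 'M[R]_(m, n)) : R :=
  sup [set vnorm2 (A *m x) / vnorm2 x | x in [set x : 'cV[R]_n | x != 0]].

Definition sigma_min m n (X : 'M[R]_(m, n)) : R :=
  inf [set Num.sqrt l | l in [set l : R | eigenvalue (X^T *m X) l /\ 0 < l]].

Definition cond m n (Z : 'M[R]_(m, n)) : R := spec_norm Z / sigma_min Z.

Definition is_compact_svd m n r (X : 'M[R]_(m, n)) (U : 'M[R]_(m, r))
    (S : 'M[R]_r) (V : 'M[R]_(n, r)) : Prop :=
  [/\ U^T *m U = 1%:M, V^T *m V = 1%:M, is_diag_mx S,
      (forall i, 0 < S i i) & X = U *m S *m V^T].

Definition is_inv_sqrtmx r (S M : 'M[R]_r) : Prop :=
  [/\ S^T = S, (forall x : 'cV[R]_r, x != 0 -> 0 < (x^T *m (S *m x)) 0 0)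
    & S *m S = invmx M].

End Defs.

From HB Require Import structures.
From mathcomp Require Import all_boot all_order all_algebra.
From mathcomp Require Import all_classical all_reals all_analysis.
From mathcomp Require Import ring lra.
Import Order.TTheory GRing.Theory Num.Theory.
Set Implicit Arguments. Unset Strict Implicit. Unset Printing Implicit Defensive.
Local Open Scope ring_scope.

(* Let a_i = L_ii^(1/8) and M := L^(1/4) = diag(a_i^2).  The two matrices in the
   difference are the M-orthogonal projections onto the ranges of Ut and U.  For
   M-orthogonal projections P, Q of equal rank the gap is symmetric:
   ||Q - P||_M <= k as soon as ||w - Q w||_M <= k ||w||_M for every w in range P.
   Such a w is X z with ||z||_2 <= ||w||_2 / sigma_min(X), and Q Xt = Xt turns
   w - Q w into -(y - Q y) with y = (Xt - X) z, whose M-norm is at most ||y||_M.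
   Passing between ||.||_M and ||.||_2 costs the factor max_i a_i / min_j a_j,
   which is at most cond(L^(3/8)) = max_i a_i^3 / min_j a_j^3. *)

Lemma unitmx_of_cV_inj (R : fieldType) n (A : 'M[R]_n) :
  (forall c : 'cV_n, A *m c = 0 -> c = 0) -> A \in unitmx.
Proof.
move=> Ainj; rewrite -unitmx_tr -row_free_unit; apply: inj_row_free => v vA0.
apply: trmx_inj; rewrite trmx0; apply: Ainj.
by rewrite -[A]trmxK -trmx_mul vA0 trmx0.
Qed.

Section SupInf.
Variable R : realType.
Local Open Scope classical_set_scope.
Implicit Types E : set R.

Lemma sup_le_ubound E k : 0 <= k -> ubound E k -> sup E <= k.
Proof.
move=> k_ge0 Ek; have [->|/set0P E_ne0] := eqVneq E set0; first by rewrite sup0.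
exact: ge_sup.
Qed.

Lemma sup_ge0 E : has_ubound E -> lbound E 0 -> 0 <= sup E.
Proof.
move=> E_ub E_ge0; have [->|/set0P [x Ex]] := eqVneq E set0; first by rewrite sup0.
exact: le_trans (E_ge0 x Ex) (ub_le_sup E_ub Ex).
Qed.

Lemma inf_ge0 E : lbound E 0 -> 0 <= inf E.
Proof.
move=> E_ge0; have [->|/set0P E_ne0] := eqVneq E set0; first by rewrite inf0.
exact: lb_le_inf.
Qed.

End SupInf.

Section PosDefForm.
Variables (R : realType) (n : nat) (M : 'M[R]_n).
Implicit Types x y z : 'cV[R]_n.

Definition dotM x y : R := (x^T *m (M *m y)) 0 0.
Definition sqnormM x : R := dotM x x.

Lemma dotMDr x y z : dotM x (y + z) = dotM x y + dotM x z.
Proof. by rewrite /dotM !mulmxDr mxE. Qed.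

Lemma dotMZr a x y : dotM x (a *: y) = a * dotM x y.
Proof. by rewrite /dotM -!scalemxAr mxE. Qed.

Lemma dotMNr x y : dotM x (- y) = - dotM x y.
Proof. by rewrite -scaleN1r dotMZr mulN1r. Qed.

Lemma dotMBr x y z : dotM x (y - z) = dotM x y - dotM x z.
Proof. by rewrite dotMDr dotMNr. Qed.

Lemma dotM0r x : dotM x 0 = 0.
Proof. by rewrite /dotM !mulmx0 mxE. Qed.

Lemma dotM_adj (A : 'M[R]_n) x y :
  A^T *m M = M *m A -> dotM (A *m x) y = dotM x (A *m y).
Proof. by move=> AM; rewrite /dotM trmx_mul -mulmxA (mulmxA A^T) AM !mulmxA. Qed.

Hypothesis M_sym : M^T = M.
Hypothesis M_posdef : forall x, x != 0 -> 0 < sqnormM x.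

Lemma dotMC x y : dotM x y = dotM y x.
Proof.
rewrite /dotM -[in LHS](trmxK (x^T *m (M *m y))) mxE.
by rewrite !trmx_mul trmxK M_sym mulmxA.
Qed.

Lemma dotM0l x : dotM 0 x = 0.
Proof. by rewrite dotMC dotM0r. Qed.

Lemma dotMNl x y : dotM (- y) x = - dotM y x.
Proof. by rewrite dotMC dotMNr dotMC. Qed.

Lemma sqnormMN x : sqnormM (- x) = sqnormM x.
Proof. by rewrite /sqnormM dotMNr dotMNl opprK. Qed.

Lemma dotMZl a x y : dotM (a *: y) x = a * dotM y x.
Proof. by rewrite dotMC dotMZr dotMC. Qed.

Lemma sqnormM_ge0 x : 0 <= sqnormM x.
Proof. by have [->|/M_posdef/ltW //] := eqVneq x 0; rewrite /sqnormM dotM0r. Qed.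

Lemma sqnormM_eq0 x : (sqnormM x == 0) = (x == 0).
Proof.
have [->|/M_posdef x_gt0] := eqVneq x 0; first by rewrite /sqnormM dotM0r eqxx.
exact: gt_eqF.
Qed.

Lemma sqnormMD x y : sqnormM (x + y) = sqnormM x + 2 * dotM x y + sqnormM y.
Proof.
rewrite /sqnormM dotMDr dotMC dotMDr [dotM (x + y) y]dotMC dotMDr [dotM y x]dotMC.
ring.
Qed.

Lemma sqnormMB x y : sqnormM (x - y) = sqnormM x - 2 * dotM x y + sqnormM y.
Proof. by rewrite sqnormMD /sqnormM !dotMNr dotMNl opprK mulrN. Qed.

Lemma dotM_Cauchy_Schwarz x y : dotM x y ^+ 2 <= sqnormM x * sqnormM y.
Proof.
have [->|/M_posdef y_gt0] := eqVneq y 0.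
  by rewrite dotM0r expr0n /= mulr_ge0 // sqnormM_ge0.
have := sqnormM_ge0 (sqnormM y *: x - dotM x y *: y).
rewrite sqnormMB /sqnormM !dotMZl !dotMZr -/(sqnormM x) -/(sqnormM y).
nra.
Qed.


Section OrthogonalProjection.
Variable P : 'M[R]_n.
Hypotheses (P_idem : P *m P = P) (P_adj : P^T *m M = M *m P).

Lemma dotM_proj_coproj x y : dotM (P *m x) (y - P *m y) = 0.
Proof. by rewrite dotM_adj // mulmxBr mulmxA P_idem subrr dotM0r. Qed.

Lemma sqnormM_proj_coproj x : sqnormM x = sqnormM (P *m x) + sqnormM (x - P *m x).
Proof.
have splitx : x = P *m x + (x - P *m x) by rewrite addrC subrK.
by rewrite [in LHS]splitx [LHS]sqnormMD dotM_proj_coproj mulr0 addr0.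
Qed.

Lemma sqnormM_coproj_le x : sqnormM (x - P *m x) <= sqnormM x.
Proof. by rewrite [leRHS]sqnormM_proj_coproj lerDr sqnormM_ge0. Qed.

End OrthogonalProjection.

Lemma mulmx_idem_of_left_inv r (U : 'M[R]_(n, r)) (B : 'M[R]_(r, n)) :
  B *m U = 1%:M -> (U *m B) *m (U *m B) = U *m B.
Proof. by move=> BU; rewrite mulmxA -(mulmxA U) BU mulmx1. Qed.

Section ProjectionGap.
Variables (r : nat) (U V : 'M[R]_(n, r)) (B C : 'M[R]_(r, n)).
Hypotheses (BU : B *m U = 1%:M) (CV : C *m V = 1%:M).
Hypotheses (P_adj : (U *m B)^T *m M = M *m (U *m B))
           (Q_adj : (V *m C)^T *m M = M *m (V *m C)).
Local Notation P := (U *m B).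
Local Notation Q := (V *m C).
Let P_idem := mulmx_idem_of_left_inv BU.
Let Q_idem := mulmx_idem_of_left_inv CV.

Variable k : R.
Hypothesis gapPQ : forall w, P *m w = w -> sqnormM (w - Q *m w) <= k ^+ 2 * sqnormM w.

Lemma proj_range_lift : k ^+ 2 < 1 ->
  forall z, Q *m z = z -> exists2 w, P *m w = w & Q *m w = z.
Proof.
move=> k_lt1 z Qz.
have PUc (c : 'cV_r) : P *m (U *m c) = U *m c by rewrite mulmxA -(mulmxA U) BU mulmx1.
(* Equal rank is used here: C *m U is square, and injective because a vector of
   range P killed by Q would violate the gap bound when k < 1. *)
have CU_unit : C *m U \in unitmx.
  apply: unitmx_of_cV_inj => c CUc0.
  have QUc0 : Q *m (U *m c) = 0 by rewrite -mulmxA (mulmxA C) CUc0 mulmx0.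
  have := gapPQ (PUc c); rewrite QUc0 subr0 => Uc_small.
  have /eqP : sqnormM (U *m c) = 0.
    by apply/eqP; rewrite eq_le sqnormM_ge0 andbT; have := sqnormM_ge0 (U *m c); nra.
  by rewrite sqnormM_eq0 => /eqP Uc0; rewrite -(mul1mx c) -BU -mulmxA Uc0 mulmx0.
exists (U *m (invmx (C *m U) *m (C *m z))); first exact: PUc.
by rewrite -mulmxA (mulmxA C) (mulmxA (C *m U)) mulmxV // mul1mx mulmxA Qz.
Qed.

Lemma gap_sym z : Q *m z = z -> sqnormM (z - P *m z) <= k ^+ 2 * sqnormM z.
Proof.
move=> Qz; have [k_ge1|k_lt1] := lerP 1 (k ^+ 2).
  apply: le_trans (sqnormM_coproj_le P_idem P_adj z) _.
  by rewrite ler_peMl // sqnormM_ge0.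
have [w Pw Qw] := proj_range_lift k_lt1 Qz.
have dot_Pz_w : dotM (P *m z) w = sqnormM z.
  by rewrite dotM_adj // Pw -{1}Qz dotM_adj // Qw.
(* <P z, w> = |z|^2, so Cauchy-Schwarz gives |z|^4 <= |P z|^2 |w|^2, while
   |w|^2 = |z|^2 + |w - z|^2 and |w - z|^2 <= k^2 |w|^2. *)
have CS := dotM_Cauchy_Schwarz (P *m z) w; rewrite dot_Pz_w in CS.
have splitz := sqnormM_proj_coproj P_idem P_adj z.
have splitw := sqnormM_proj_coproj Q_idem Q_adj w; rewrite Qw in splitw.
have gapw := gapPQ Pw; rewrite Qw in gapw.
have A_ge0 := sqnormM_ge0 (P *m z); have E_ge0 := sqnormM_ge0 (z - P *m z).
have D_ge0 := sqnormM_ge0 (w - z).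
have [W0|W_neq0] := eqVneq (sqnormM w) 0.
  have Z0 : sqnormM z = 0 by move: CS; rewrite W0 mulr0; nra.
  nra.
have W_gt0 : 0 < sqnormM w by rewrite lt_def W_neq0 sqnormM_ge0.
rewrite -(ler_pM2r W_gt0).
have : 0 <= sqnormM z * (k ^+ 2 * sqnormM w - sqnormM (w - z)).
  by rewrite mulr_ge0 ?subr_ge0 // splitz addr_ge0.
nra.
Qed.

Lemma gap_coproj x :
  sqnormM (Q *m (x - P *m x)) <= k ^+ 2 * sqnormM (x - P *m x).
Proof.
set w := x - P *m x; set z := Q *m w.
have Pw0 : P *m w = 0 by rewrite mulmxBr mulmxA P_idem subrr.
have z_dot : sqnormM z = dotM w (z - P *m z).
  rewrite dotMBr -dotM_adj // Pw0 dotM0l subr0.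
  by rewrite /sqnormM {1}/z dotM_adj // /z mulmxA Q_idem.
have CS := dotM_Cauchy_Schwarz w (z - P *m z).
have gapz : sqnormM (z - P *m z) <= k ^+ 2 * sqnormM z.
  by apply: gap_sym; rewrite /z mulmxA Q_idem.
rewrite -z_dot in CS.
have [z0|z_neq0] := eqVneq (sqnormM z) 0.
  by rewrite z0 mulr_ge0 ?sqr_ge0 ?sqnormM_ge0.
have z_gt0 : 0 < sqnormM z by rewrite lt_def z_neq0 sqnormM_ge0.
rewrite -(ler_pM2l z_gt0) -expr2 (le_trans CS) //.
rewrite [leLHS]mulrC mulrA [sqnormM z * _]mulrC.
exact (ler_wpM2r (sqnormM_ge0 w) gapz).
Qed.

Lemma sqnormM_proj_sub_le x : sqnormM ((Q - P) *m x) <= k ^+ 2 * sqnormM x.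
Proof.
have -> : (Q - P) *m x = Q *m (x - P *m x) - (P *m x - Q *m (P *m x)).
  by rewrite mulmxBl mulmxBr opprB addrA subrK.
rewrite sqnormMB dotM_proj_coproj // mulr0 subr0.
rewrite (sqnormM_proj_coproj P_idem P_adj x) mulrDr addrC.
by apply: lerD; [apply: gapPQ; rewrite mulmxA P_idem | exact: gap_coproj].
Qed.

End ProjectionGap.

Lemma gram_unitmx r (U : 'M[R]_(n, r)) : U^T *m U = 1%:M -> U^T *m M *m U \in unitmx.
Proof.
move=> UU; apply: unitmx_of_cV_inj => c Gc0.
have /eqP : sqnormM (U *m c) = 0.
  by rewrite /sqnormM /dotM trmx_mul !mulmxA -3!(mulmxA c^T) Gc0 mulmx0 mxE.
by rewrite sqnormM_eq0 => /eqP Uc0; rewrite -(mul1mx c) -UU -mulmxA Uc0 mulmx0.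
Qed.

Lemma inv_sqrtmx_proj r (U : 'M[R]_(n, r)) (S : 'M[R]_r) :
  U^T *m U = 1%:M -> is_inv_sqrtmx S (U^T *m M *m U) ->
  exists B : 'M[R]_(r, n), [/\ B *m U = 1%:M, (U *m B)^T *m M = M *m (U *m B)
                            & (U *m S) *m (U *m S)^T *m M = U *m B].
Proof.
move=> UU [S_sym _ SS]; exists (S *m S^T *m U^T *m M); split.
- rewrite S_sym -(mulmxA _ U^T) -(mulmxA _ (U^T *m M)) SS.
  by rewrite mulVmx // gram_unitmx.
- by rewrite !trmx_mul !trmxK M_sym !mulmxA.
- by rewrite !trmx_mul !mulmxA.
Qed.

Lemma opnormM_le (A : 'M[R]_n) k : 0 <= k ->
  (forall x, sqnormM (A *m x) <= k ^+ 2 * sqnormM x) -> opnormM M A <= k.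
Proof.
move=> k_ge0 Ak; apply: sup_le_ubound => // _ [x /= x_neq0 <-].
rewrite ler_pdivrMr ?sqrtr_gt0 ?M_posdef // -(ger0_norm k_ge0) -sqrtr_sqr.
by rewrite -sqrtrM ?sqr_ge0 // ler_sqrt ?Ak // mulr_ge0 ?sqr_ge0 ?sqnormM_ge0.
Qed.

End PosDefForm.

Section EuclideanNorm.
Variable R : realType.

Definition sqnorm2 n (x : 'cV[R]_n) : R := (x^T *m x) 0 0.

Lemma sqnorm2E n (x : 'cV[R]_n) : sqnorm2 x = \sum_i x i 0 ^+ 2.
Proof. by rewrite /sqnorm2 mxE; apply: eq_bigr => i _; rewrite mxE expr2. Qed.

Lemma sqnorm2_ge0 n (x : 'cV[R]_n) : 0 <= sqnorm2 x.
Proof. by rewrite sqnorm2E sumr_ge0 // => i _; rewrite sqr_ge0. Qed.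

Lemma sqnorm2Z n a (x : 'cV[R]_n) : sqnorm2 (a *: x) = a ^+ 2 * sqnorm2 x.
Proof. by rewrite !sqnorm2E mulr_sumr; apply: eq_bigr => i _; rewrite mxE exprMn. Qed.

Lemma sqr_entry_le_sqnorm2 n (x : 'cV[R]_n) i : x i 0 ^+ 2 <= sqnorm2 x.
Proof. by rewrite sqnorm2E (bigD1 i) //= lerDl sumr_ge0 // => j _; rewrite sqr_ge0. Qed.

Lemma sqnorm2_gt0 n (x : 'cV[R]_n) : x != 0 -> 0 < sqnorm2 x.
Proof.
case/cV0Pn => i xi_neq0; apply: lt_le_trans (sqr_entry_le_sqnorm2 x i).
by rewrite exprn_even_gt0.
Qed.

Lemma sqnorm2_orthonormal n r (W : 'M[R]_(n, r)) c :
  W^T *m W = 1%:M -> sqnorm2 (W *m c) = sqnorm2 c.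
Proof. by move=> WW; rewrite /sqnorm2 trmx_mul -mulmxA (mulmxA W^T) WW mul1mx. Qed.

Lemma dotM_diagE n (m : 'rV[R]_n) x y :
  dotM (diag_mx m) x y = \sum_i m 0 i * x i 0 * y i 0.
Proof. by rewrite /dotM mxE; apply: eq_bigr => i _; rewrite mul_diag_mx !mxE; ring. Qed.

Lemma diag_mx_posdef n (m : 'rV[R]_n) : (forall i, 0 < m 0 i) ->
  forall x, x != 0 -> 0 < sqnormM (diag_mx m) x.
Proof.
move=> m_gt0 x /cV0Pn [i xi_neq0]; rewrite /sqnormM dotM_diagE (bigD1 i) //=.
rewrite -mulrA -expr2; apply: ltr_pwDl; first by rewrite mulr_gt0 ?exprn_even_gt0.
by rewrite sumr_ge0 // => j _; rewrite -mulrA -expr2 mulr_ge0 ?sqr_ge0 // ltW.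
Qed.

Lemma sqnormM_diag_sqnorm2_le n (m : 'rV[R]_n) c2 (y w : 'cV[R]_n) :
  (forall i j, m 0 i <= c2 * m 0 j) ->
  sqnormM (diag_mx m) y * sqnorm2 w <= c2 * sqnorm2 y * sqnormM (diag_mx m) w.
Proof.
move=> m_ratio; rewrite /sqnormM !dotM_diagE !sqnorm2E -mulrA.
rewrite [in leLHS]mulr_suml [in leRHS]mulr_suml [in leRHS]mulr_sumr; apply: ler_sum => i _.
rewrite [in leLHS]mulr_sumr [in leRHS]mulrA [in leRHS]mulr_sumr; apply: ler_sum => j _.
have yw_ge0 : 0 <= y i 0 ^+ 2 * w j 0 ^+ 2 by rewrite mulr_ge0 ?sqr_ge0.
rewrite [leLHS](_ : _ = m 0 i * (y i 0 ^+ 2 * w j 0 ^+ 2)); last ring.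
rewrite [leRHS](_ : _ = c2 * m 0 j * (y i 0 ^+ 2 * w j 0 ^+ 2)); last ring.
exact: ler_wpM2r.
Qed.

Lemma sqnormM_diag_le_of_sqnorm2_le n (m : 'rV[R]_n) c2 K (y w : 'cV[R]_n) :
  (forall i, 0 < m 0 i) -> (forall i j, m 0 i <= c2 * m 0 j) -> 0 <= c2 ->
  sqnorm2 y <= K * sqnorm2 w ->
  sqnormM (diag_mx m) y <= c2 * K * sqnormM (diag_mx m) w.
Proof.
move=> m_gt0 m_ratio c2_ge0 yw.
have M_posdef := diag_mx_posdef m_gt0.
have [w0|/sqnorm2_gt0 w_gt0] := eqVneq w 0.
  have y_le0 : sqnorm2 y <= 0 by rewrite (le_trans yw) // w0 /sqnorm2 mulmx0 mxE mulr0.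
  have [y0|/sqnorm2_gt0] := eqVneq y 0; last by rewrite ltNge y_le0.
  by rewrite y0 w0 /sqnormM !dotM0r mulr0.
rewrite -(ler_pM2r w_gt0).
apply: le_trans (sqnormM_diag_sqnorm2_le _ _ m_ratio) _.
rewrite -!mulrA; apply: ler_wpM2l => //.
rewrite mulrCA [leLHS]mulrC; apply: ler_wpM2l => //.
exact: sqnormM_ge0 M_posdef w.
Qed.

End EuclideanNorm.

Section SingularValues.
Variable R : realType.
Local Open Scope classical_set_scope.

Lemma vnorm2_gt0 n (x : 'cV[R]_n) : x != 0 -> 0 < vnorm2 x.
Proof. by move=> /sqnorm2_gt0; rewrite sqrtr_gt0. Qed.

Lemma spec_norm_has_ubound p n (A : 'M[R]_(p, n)) :
  has_ubound [set vnorm2 (A *m x) / vnorm2 x | x in [set x : 'cV[R]_n | x != 0]].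
Proof.
exists (Num.sqrt (\sum_i (\sum_j `|A i j|) ^+ 2)) => _ [x /= /vnorm2_gt0 x_gt0 <-].
have sum_ge0 : 0 <= \sum_i (\sum_j `|A i j|) ^+ 2 by rewrite sumr_ge0 // => i _; rewrite sqr_ge0.
rewrite ler_pdivrMr // -sqrtrM // ler_sqrt ?mulr_ge0 ?sqnorm2_ge0 //.
rewrite -/(sqnorm2 x) -/(sqnorm2 (A *m x)) sqnorm2E mulr_suml; apply: ler_sum => i _.
have entry_le j : `|x j 0| <= vnorm2 x.
  by rewrite -sqrtr_sqr ler_sqrt ?sqnorm2_ge0 // sqr_entry_le_sqnorm2.
rewrite -[_ ^+ 2]real_normK ?num_real // -[sqnorm2 x]sqr_sqrtr ?sqnorm2_ge0 // -exprMn.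
rewrite ler_pXn2r ?nnegrE ?mulr_ge0 ?sumr_ge0 ?sqrtr_ge0 //.
rewrite mxE mulr_suml; apply: le_trans (ler_norm_sum _ _ _) _; apply: ler_sum => j _.
by rewrite normrM ler_wpM2l.
Qed.

Lemma spec_norm_ge0 p n (A : 'M[R]_(p, n)) : 0 <= spec_norm A.
Proof.
apply: sup_ge0 (spec_norm_has_ubound A) _ => _ [x _ <-].
by rewrite divr_ge0 ?sqrtr_ge0.
Qed.

Lemma sqnorm2_mul_le p n (A : 'M[R]_(p, n)) x :
  sqnorm2 (A *m x) <= spec_norm A ^+ 2 * sqnorm2 x.
Proof.
have [->|x_neq0] := eqVneq x 0; first by rewrite mulmx0 /sqnorm2 !mulmx0 mxE mulr0.
have x_gt0 := vnorm2_gt0 x_neq0.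
have : vnorm2 (A *m x) / vnorm2 x <= spec_norm A.
  by apply: ub_le_sup; [exact: spec_norm_has_ubound | exists x].
rewrite ler_pdivrMr // -(ler_pXn2r (_ : 0 < 2)%N) ?nnegrE ?mulr_ge0 ?spec_norm_ge0 ?sqrtr_ge0 //.
by rewrite exprMn !sqr_sqrtr ?sqnorm2_ge0.
Qed.

Lemma sigma_min_ge0 p n (Y : 'M[R]_(p, n)) : 0 <= sigma_min Y.
Proof. by apply: inf_ge0 => _ [l _ <-]; exact: sqrtr_ge0. Qed.

Section GramSpectrum.
Variables (n r : nat) (W : 'M[R]_(n, r)) (lam : 'rV[R]_r).
Hypothesis WW : W^T *m W = 1%:M.

Lemma eigenvalue_gram_diag j : eigenvalue (W *m diag_mx lam *m W^T) (lam 0 j).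
Proof.
apply/eigenvalueP; exists (delta_mx 0 j *m W^T).
  rewrite !mulmxA -(mulmxA (delta_mx 0 j)) WW mulmx1 scalemxAl.
  apply: (congr1 (mulmx^~ W^T)); apply/rowP => b; rewrite mul_mx_diag !mxE eqxx /=.
  by case: eqP => [->|_]; rewrite ?mulr1 ?mul1r ?mulr0 ?mul0r.
apply/eqP => /(congr1 (mulmx^~ W)); rewrite -mulmxA WW mulmx1 mul0mx.
by move/rowP/(_ j); rewrite !mxE !eqxx; apply/eqP; rewrite oner_eq0.
Qed.

Lemma eigenvalue_gram_diagP l : l != 0 ->
  eigenvalue (W *m diag_mx lam *m W^T) l -> exists j, l = lam 0 j.
Proof.
move=> l_neq0 /eigenvalueP [v vG v_neq0].
have uD : (v *m W) *m diag_mx lam = l *: (v *m W).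
  by rewrite scalemxAl -vG !mulmxA -(mulmxA _ W^T) WW mulmx1.
have : v *m W != 0.
  apply: contra v_neq0 => /eqP vW0.
  have /eqP : l *: v = 0 by rewrite -vG !mulmxA vW0 !mul0mx.
  by rewrite scaler_eq0 (negbTE l_neq0).
case/rV0Pn => j vWj; exists j.
move/rowP/(_ j): uD; rewrite mul_mx_diag mxE [X in _ = X]mxE => e.
by apply: (mulIf vWj); rewrite -e mulrC.
Qed.

End GramSpectrum.

Section GramSigmaMin.
Variables (p n r : nat) (Y : 'M[R]_(p, n)) (W : 'M[R]_(n, r)) (lam : 'rV[R]_r).
Hypotheses (WW : W^T *m W = 1%:M) (lam_gt0 : forall j, 0 < lam 0 j).
Hypothesis YY : Y^T *m Y = W *m diag_mx lam *m W^T.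

Let sigma_set := [set Num.sqrt l | l in [set l : R | eigenvalue (Y^T *m Y) l /\ 0 < l]].

Let sigma_set_has_lbound : has_lbound sigma_set.
Proof. by exists 0 => _ [l _ <-]; exact: sqrtr_ge0. Qed.

Lemma sigma_min_le_gram j : sigma_min Y <= Num.sqrt (lam 0 j).
Proof.
apply: (ge_inf sigma_set_has_lbound); exists (lam 0 j) => //.
by rewrite YY; split; [exact: eigenvalue_gram_diag | exact: lam_gt0].
Qed.

Lemma sigma_min_gram_gt0 (j0 : 'I_r) : 0 < sigma_min Y.
Proof.
have [j _ j_min] := arg_minP (fun j => lam 0 j) (erefl true : xpredT j0).
apply: lt_le_trans (_ : 0 < Num.sqrt (lam 0 j)) _; first by rewrite sqrtr_gt0.
apply: lb_le_inf; first by exists (Num.sqrt (lam 0 j)); exists (lam 0 j);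
  rewrite // YY; split; [exact: eigenvalue_gram_diag | exact: lam_gt0].
move=> _ [l [eig_l l_gt0] <-].
rewrite YY in eig_l; have [i ->] := eigenvalue_gram_diagP WW (lt0r_neq0 l_gt0) eig_l.
by rewrite ler_sqrt ?j_min // ltW.
Qed.

End GramSigmaMin.

End SingularValues.

Section CompactSVD.
Variables (R : realType) (m n r : nat).
Variables (X : 'M[R]_(m, n)) (U : 'M[R]_(m, r)) (S : 'M[R]_r) (V : 'M[R]_(n, r)).
Hypothesis svdX : is_compact_svd X U S V.

Let S_diag : S = diag_mx (\row_j S j j).
Proof.
case: svdX => _ _ /is_diag_mxP S_offdiag _ _; apply/matrixP => i j; rewrite !mxE.
by have [->|ij] := eqVneq i j; rewrite ?mulr1n // mulr0n S_offdiag.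
Qed.

Lemma svd_gram : X^T *m X = V *m diag_mx (\row_j S j j ^+ 2) *m V^T.
Proof.
case: svdX => UU _ _ _ ->; rewrite !trmx_mul trmxK -!mulmxA (mulmxA U^T) UU mul1mx.
rewrite !mulmxA [in LHS]S_diag tr_diag_mx -(mulmxA V) mulmx_diag.
by congr (_ *m diag_mx _ *m _); apply/rowP => j; rewrite !mxE expr2.
Qed.

Let sqr_diag_gt0 j : 0 < (\row_j S j j ^+ 2) 0 j.
Proof. by case: svdX => _ _ _ S_gt0 _; rewrite mxE exprn_gt0. Qed.

Lemma sigma_min_le_svd j : sigma_min X <= S j j.
Proof.
case: svdX => _ VV _ S_gt0 _.
have := sigma_min_le_gram VV sqr_diag_gt0 svd_gram j.
by rewrite mxE sqrtr_sqr ger0_norm // ltW.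
Qed.

Lemma sigma_min_svd_gt0 (j : 'I_r) : 0 < sigma_min X.
Proof. by case: svdX => _ VV _ _ _; exact: sigma_min_gram_gt0 VV sqr_diag_gt0 svd_gram j. Qed.

Lemma svd_range_preimage a :
  exists2 z, X *m z = U *m a & sigma_min X ^+ 2 * sqnorm2 z <= sqnorm2 (U *m a).
Proof.
case: svdX => UU VV _ S_gt0 XE.
pose g := \col_i (a i 0 / S i i).
have Sg : S *m g = a.
  apply/colP => i; rewrite S_diag mul_diag_mx !mxE mulrCA divff ?mulr1 //.
  exact: lt0r_neq0.
exists (V *m g); first by rewrite XE -!mulmxA (mulmxA V^T) VV mul1mx Sg.
rewrite sqnorm2_orthonormal // sqnorm2_orthonormal // !sqnorm2E mulr_sumr.
apply: ler_sum => i _; rewrite mxE.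
have sigma_le1 : sigma_min X / S i i <= 1 by rewrite ler_pdivrMr ?mul1r ?sigma_min_le_svd.
rewrite -[leRHS]mulr1 [leLHS](_ : _ = a i 0 ^+ 2 * (sigma_min X / S i i) ^+ 2).
  rewrite ler_wpM2l ?sqr_ge0 //.
  exact: exprn_ile1 (divr_ge0 (sigma_min_ge0 X) (ltW (S_gt0 i))) sigma_le1.
by rewrite !expr_div_n; field; rewrite lt0r_neq0.
Qed.

End CompactSVD.

Section Condition.
Variable R : realType.

Lemma cond_ge0 m n (Z : 'M[R]_(m, n)) : 0 <= cond Z.
Proof. by rewrite /cond divr_ge0 ?spec_norm_ge0 ?sigma_min_ge0. Qed.

Lemma cond_diag_ratio n (d : 'rV[R]_n) : (forall i, 0 < d 0 i) ->
  forall i j, d 0 i / d 0 j <= cond (diag_mx d).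
Proof.
move=> d_gt0 i j.
have spec_ge : d 0 i <= spec_norm (diag_mx d).
  set e : 'cV[R]_n := delta_mx i 0.
  have e_gt0 : 0 < sqnorm2 e.
    by apply: sqnorm2_gt0; apply/cV0Pn; exists i; rewrite mxE !eqxx oner_neq0.
  have de : diag_mx d *m e = d 0 i *: e.
    apply/colP => k; rewrite mul_diag_mx !mxE eqxx andbT.
    by case: eqP => [->|_]; rewrite ?mulr0.
  have := sqnorm2_mul_le (diag_mx d) e.
  rewrite de sqnorm2Z ler_pM2r //.
  by rewrite ler_pXn2r // nnegrE ?spec_norm_ge0 // ltW.
have II : (1%:M : 'M[R]_n)^T *m 1%:M = 1%:M by rewrite trmx1 mulmx1.
have dd_gt0 k : 0 < (\row_k d 0 k ^+ 2) 0 k by rewrite mxE exprn_gt0.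
have dd : (diag_mx d)^T *m diag_mx d = 1%:M *m diag_mx (\row_k d 0 k ^+ 2) *m (1%:M)^T.
  by rewrite tr_diag_mx mulmx_diag trmx1 mul1mx mulmx1; congr diag_mx; apply/rowP => k; rewrite !mxE.
have sigma_le : sigma_min (diag_mx d) <= d 0 j.
  by have := sigma_min_le_gram II dd_gt0 dd j; rewrite mxE sqrtr_sqr ger0_norm // ltW.
have sigma_gt0 := sigma_min_gram_gt0 II dd_gt0 dd j.
apply: (@le_trans _ _ (d 0 i / sigma_min (diag_mx d))).
  by rewrite ler_pM2l // lef_pV2 ?posrE.
by rewrite ler_pM2r ?invr_gt0.
Qed.

Lemma le_mul_of_cube_le (a b c : R) : 0 < a -> 0 < b -> 1 <= c ->
  a ^+ 3 <= c * b ^+ 3 -> a <= c * b.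
Proof.
move=> a_gt0 b_gt0 c_ge1 abc; rewrite leNgt; apply/negP => cb_lt_a.
have cb_gt0 : 0 < c * b by rewrite mulr_gt0 // (lt_le_trans ltr01).
have : (c * b) ^+ 3 < a ^+ 3 by rewrite ltr_pXn2r // nnegrE ltW.
have c_le_c3 : c <= c ^+ 3.
  by rewrite exprSr ler_peMl ?(le_trans ler01) // exprn_ege1.
have := ler_wpM2r (exprn_ge0 3 (ltW b_gt0)) c_le_c3.
rewrite exprMn; lra.
Qed.

Lemma sqr_le_cond_diag_cube n (a : 'I_n -> R) : (forall i, 0 < a i) ->
  forall i j, a i ^+ 2 <= cond (diag_mx (\row_k a k ^+ 3)) ^+ 2 * a j ^+ 2.
Proof.
move=> a_gt0 i j; have a3_gt0 k : 0 < (\row_k a k ^+ 3) 0 k by rewrite mxE exprn_gt0.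
have := cond_diag_ratio a3_gt0 i i; have := cond_diag_ratio a3_gt0 i j.
rewrite !mxE divff ?lt0r_neq0 ?exprn_gt0 // ler_pdivrMr ?exprn_gt0 // => a3_le c_ge1.
rewrite -exprMn ler_pXn2r ?nnegrE ?(ltW (a_gt0 i)) ?(mulr_ge0 (cond_ge0 _) (ltW (a_gt0 j))) //.
exact: le_mul_of_cube_le.
Qed.

End Condition.

Section WeightedRangeGap.
Variable R : realType.

Lemma diag_powRE n (L : 'M[R]_n) p : diag_powR L p = diag_mx (\row_i L i i `^ p).
Proof.
apply/matrixP => i j; rewrite !mxE.
by have [->|_] := eqVneq i j; rewrite ?mulr1n ?mulr0n.
Qed.

Lemma diag_powR_natmul n (L : 'M[R]_n) p q k : (forall i, 0 <= L i i) ->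
  q = p * k%:R -> diag_powR L q = diag_mx (\row_i (L i i `^ p) ^+ k).
Proof.
move=> L_ge0 ->; rewrite diag_powRE; congr diag_mx; apply/rowP => i.
by rewrite !mxE powRrM powR_mulrn ?powR_ge0.
Qed.

Lemma svd_range_gap n1 n2 r (m : 'rV[R]_n1) c (Xt X : 'M[R]_(n1, n2))
    (U : 'M[R]_(n1, r)) (S : 'M[R]_r) (V : 'M[R]_(n2, r)) (Q : 'M[R]_n1) a :
  (forall i, 0 < m 0 i) -> (forall i j, m 0 i <= c ^+ 2 * m 0 j) ->
  is_compact_svd X U S V -> Q *m Xt = Xt ->
  (forall y, sqnormM (diag_mx m) (y - Q *m y) <= sqnormM (diag_mx m) y) ->
  sqnormM (diag_mx m) (U *m a - Q *m (U *m a))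
    <= (c / sigma_min X * spec_norm (Xt - X)) ^+ 2 * sqnormM (diag_mx m) (U *m a).
Proof.
move=> m_gt0 m_ratio svdX QXt Q_contr.
have [->|/cV0Pn [i _]] := eqVneq a 0.
  by rewrite !mulmx0 subr0 /sqnormM dotM0r mulr0.
have sigma_gt0 := sigma_min_svd_gt0 svdX i.
have [z Xz z_le] := svd_range_preimage svdX a.
set w := U *m a; set y := (Xt - X) *m z.
have yE : y - Q *m y = - (w - Q *m w).
  by rewrite /y mulmxBl Xz mulmxBr mulmxA QXt !opprB addrC addrA subrK.
have y_le : sqnorm2 y <= (spec_norm (Xt - X) / sigma_min X) ^+ 2 * sqnorm2 w.
  apply: le_trans (sqnorm2_mul_le _ _) _.
  rewrite expr_div_n [leRHS]mulrAC ler_pdivlMr ?exprn_gt0 // -mulrA.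
  by apply: ler_wpM2l; rewrite ?sqr_ge0 // mulrC.
have -> : sqnormM (diag_mx m) (w - Q *m w) = sqnormM (diag_mx m) (y - Q *m y).
  by rewrite yE sqnormMN // tr_diag_mx.
apply: le_trans (Q_contr y) _.
have -> : c / sigma_min X * spec_norm (Xt - X) = c * (spec_norm (Xt - X) / sigma_min X).
  by rewrite mulrAC mulrA.
rewrite exprMn; apply: sqnormM_diag_le_of_sqnorm2_le => //.
exact: sqr_ge0.
Qed.

End WeightedRangeGap.

Theorem lemma3p6 (R : realType) (n1 n2 r : nat) (L : 'M[R]_n1)
  (Xt X : 'M[R]_(n1, n2)) (Ut U : 'M[R]_(n1, r)) (St S : 'M[R]_r)
  (Vt V : 'M[R]_(n2, r)) (Pt P : 'M[R]_r) :
  is_diag_mx L -> (forall i, 0 < L i i) ->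
  is_compact_svd Xt Ut St Vt -> is_compact_svd X U S V ->
  is_inv_sqrtmx Pt (Ut^T *m diag_powR L (1 / 4) *m Ut) ->
  is_inv_sqrtmx P (U^T *m diag_powR L (1 / 4) *m U) ->
  opnormM (diag_powR L (1 / 4))
    ((Ut *m Pt) *m (Ut *m Pt)^T *m diag_powR L (1 / 4)
     - (U *m P) *m (U *m P)^T *m diag_powR L (1 / 4))
  <= cond (diag_powR L (3 / 8)) / sigma_min X * spec_norm (Xt - X).
Proof.
move=> _ L_gt0 [UtUt _ _ _ XtE] svdX Pt_inv P_inv; have [UU _ _ _ _] := svdX.
have L_ge0 i : 0 <= L i i := ltW (L_gt0 i).
pose a i := L i i `^ (1 / 8); pose M := diag_mx (\row_i a i ^+ 2).
have a_gt0 i : 0 < a i by apply: powR_gt0.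
have -> : diag_powR L (3 / 8) = diag_mx (\row_i a i ^+ 3).
  by apply: diag_powR_natmul => //; field.
have ME : diag_powR L (1 / 4) = M by apply: diag_powR_natmul => //; field.
rewrite ME in Pt_inv P_inv *.
have m_gt0 i : 0 < (\row_i a i ^+ 2) 0 i by rewrite mxE exprn_gt0.
have M_sym : M^T = M by rewrite tr_diag_mx.
have M_posdef := diag_mx_posdef m_gt0.
have [Bt [BtUt Q_adj ->]] := inv_sqrtmx_proj M_sym M_posdef UtUt Pt_inv.
have [B [BU P_adj ->]] := inv_sqrtmx_proj M_sym M_posdef UU P_inv.
apply: (opnormM_le M_posdef) => [|x].
  by rewrite mulr_ge0 ?spec_norm_ge0 // divr_ge0 ?cond_ge0 ?sigma_min_ge0.
apply: (sqnormM_proj_sub_le M_sym M_posdef BU BtUt P_adj Q_adj) => w Pw.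
rewrite -Pw -mulmxA; apply: svd_range_gap svdX _ _ => //.
- by move=> i j; rewrite !mxE; exact: sqr_le_cond_diag_cube.
- by rewrite XtE !mulmxA -(mulmxA Ut) BtUt mulmx1.
- exact: sqnormM_coproj_le (mulmx_idem_of_left_inv BtUt) Q_adj.
Qed.
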